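(* (i) Let $p, m, r \in \mathbb N$. Then \begin{align*} S(p,m,1,r,1) &=\sum_{i=1}^{m}\frac{(-1)^{m-i}}{r^{m-i+1}}S_{p,i}^{+,-}+\frac{(-1)^{m+r}}{r^{m}}S_{p,1}^{+,-} +\frac{(-1)^{m+r-1}}{r^{m}}\overline{\zeta}(p+1)\\ &\quad +\frac{(-1)^{m}}{r^{m}}\left(\sum_{j=1}^{p}(-1)^{p-j+r}\overline{\zeta}(j)\overline{H}_{r-1}^{(p-j+1)} +(-1)^{p+r-1}\overline{\zeta}(1)H_{r-1}^{(p)}\right) +\frac{(-1)^{m+p+r}}{r^{m}}\sum_{n=1}^{r-1}\frac{\overline{H}_{n}}{n^{p}}\,. \end{align*} (ii) Let $m, r \in \mathbb N$, $p \in \mathbb N_{0}$ with $m \geq p+1$. Then \begin{align*} S(-p,m,1,r,1) =\frac{1}{p+1}\sum_{\ell=0}^{p} \binom{p+1}{\ell}B_{\ell}^{+} \left(\sum_{i=1}^{m-p-1+\ell}\frac{(-1)^{m-p-1+\ell-i}}{r^{m-p+\ell-i}}\overline{\zeta}(i) +\frac{(-1)^{m-p-1+\ell+r}}{r^{m-p-1+\ell}}(\overline{\zeta}(1)-\overline{H}_{r})\right)\,. \end{align*}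
   Context: $H_n^{(q)}=\sum_{j=1}^n j^{-q}$ for $q\in\mathbb N$; for an integer $q\ge0$, $H_n^{(-q)}=\sum_{\ell=1}^n\ell^q$. $\overline{H}_n^{(q)}=\sum_{j=1}^n (-1)^{j-1}j^{-q}$, $\overline{H}_n=\overline{H}_n^{(1)}$; these are $0$ for $n=0$. $\overline{\zeta}(s)=\sum_{n\ge1}(-1)^{n-1}n^{-s}$, $\overline{\zeta}(1)=\log 2$. For $q\in\mathbb Z$ and $m,t,r\in\mathbb N$, $S(q,m,t,r,1):=\sum_{n=1}^\infty\frac{(-1)^{n+1}H_n^{(q)}}{n^{m}(n+r)^{t}}$. $S_{p,q}^{+,-}:=\sum_{n=1}^\infty (-1)^{n-1}H_n^{(p)}/n^q$. Bernoulli numbers $B_j^{+}$: $\frac{x}{1-e^{-x}}=\sum_{j\ge0}B_j^{+}\frac{x^j}{j!}$. Empty sums are $0$. *)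

From Stdlib Require Import Reals ZArith List.
From Coquelicot Require Import Coquelicot.
Open Scope R_scope.

Fixpoint sum1 (n : nat) (f : nat -> R) : R :=
  match n with
  | O => 0
  | S k => sum1 k f + f (S k)
  end.

Definition Hgen (q : Z) (n : nat) : R :=
  sum1 n (fun j => powerRZ (INR j) (- q)).

Definition Hbar (q : nat) (n : nat) : R :=
  sum1 n (fun j => (-1) ^ (j + 1) / (INR j) ^ q).

(* \overline{\zeta}(s) = sum_{n>=1} (-1)^{n-1} n^{-s} (series indexed from n-1 = 0) *)
Definition zetabar (s : nat) : R :=
  Series (fun k => (-1) ^ k / (INR (S k)) ^ s).

Definition Spm (p q : nat) : R :=
  Series (fun k => (-1) ^ k * Hgen (Z.of_nat p) (S k) / (INR (S k)) ^ q).

(* general term (index k = n-1) of S(q,m,t,r,1) =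
   sum_{n>=1} (-1)^{n+1} H_n^{(q)} / (n^m (n+r)^t) *)
Definition S_term (q : Z) (m t r : nat) (k : nat) : R :=
  (-1) ^ k * Hgen q (S k) / ((INR (S k)) ^ m * (INR (S k + r)) ^ t).

Definition S5 (q : Z) (m t r : nat) : R := Series (S_term q m t r).

(* Bernoulli numbers B_j^+ (x/(1-e^{-x}) = sum B_j^+ x^j/j!), via the
   equivalent standard recurrence sum_{k=0}^{n} C(n+1,k) B_k^+ = n+1. *)
Fixpoint bernp_list (n : nat) : list R :=
  match n with
  | O => 1 :: nil
  | S k => let l := bernp_list k in
           l ++ (1 - / INR (k + 2) *
                 sum_f_R0 (fun i => Binomial.C (k + 2) i * nth i l 0) k) :: nil
  end.

Definition bernp (j : nat) : R := nth j (bernp_list j) 0.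

From Stdlib Require Import Reals ZArith List Lra Lia.
From Coquelicot Require Import Coquelicot.
Open Scope R_scope.

(* The partial fraction decomposition
     1 / (n^m (n + r)) = sum_{i=1}^m (-1)^(m-i) r^(i-m-1) n^(-i) + (-1)^m r^(-m) / (n + r)
   splits S(q,m,1,r,1) into alternating series with denominators n^i, which are
   S^{+,-}_{p,i} resp. alternating zeta values, plus one series with denominator n + r.
   For q = p > 0 this last series U_r = sum (-1)^(n-1) H_n^(p) / (n + r) satisfies
   U_{r+1} = W_r - U_r after the shift n -> n + 1, where W_r = sum (-1)^(n-1) / (n^p (n + r))
   is again evaluated by partial fractions; unrolling the recurrence gives (i).
   For q = -p, Faulhaber's formula (p+1) H_n^(-p) = sum_l C(p+1,l) B_l^+ n^(p+1-l)
   writes S(-p,m,1,r,1) as a combination of the series W with exponents m-p-1+l >= 0,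
   which gives (ii). *)

Lemma sum1_ext n f g : (forall i, (1 <= i <= n)%nat -> f i = g i) -> sum1 n f = sum1 n g.
Proof.
  induction n as [|n IH]; intros Hfg; simpl; [reflexivity|].
  rewrite IH, Hfg; [reflexivity | lia | intros; apply Hfg; lia].
Qed.

Lemma sum1_plus n f g : sum1 n (fun i => f i + g i) = sum1 n f + sum1 n g.
Proof. induction n as [|n IH]; simpl; [ring | rewrite IH; ring]. Qed.

Lemma sum1_scal n c f : sum1 n (fun i => c * f i) = c * sum1 n f.
Proof. induction n as [|n IH]; simpl; [ring | rewrite IH; ring]. Qed.

Lemma sum1_opp n f : sum1 n (fun i => - f i) = - sum1 n f.
Proof. induction n as [|n IH]; simpl; [ring | rewrite IH; ring]. Qed.

Lemma sum1_minus n f g : sum1 n (fun i => f i - g i) = sum1 n f - sum1 n g.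
Proof. induction n as [|n IH]; simpl; [ring | rewrite IH; ring]. Qed.

Lemma sum1_comm n m (f : nat -> nat -> R) :
  sum1 n (fun i => sum1 m (f i)) = sum1 m (fun j => sum1 n (fun i => f i j)).
Proof.
  induction n as [|n IH]; simpl.
  - induction m as [|m IHm]; simpl; [reflexivity | rewrite <- IHm; ring].
  - rewrite IH, <- sum1_plus. reflexivity.
Qed.

(* Coquelicot's [is_series_ext] states the pointwise equality in the carrier of a
   normed module, which [ring] and [field] do not recognise as [R]. *)
Lemma is_series_ext_R (a b : nat -> R) l :
  (forall n, a n = b n) -> is_series a l -> is_series b l.
Proof. apply is_series_ext. Qed.

Lemma is_series_zero : is_series (fun _ => 0) 0.
Proof.
  apply (is_lim_seq_ext (fun _ => 0) (sum_n (fun _ => 0)) 0); [|apply is_lim_seq_const].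
  intros n. rewrite sum_n_Reals, sum_cte. ring.
Qed.

Lemma is_series_sum1 n (a : nat -> nat -> R) (l : nat -> R) :
  (forall i, (1 <= i <= n)%nat -> is_series (a i) (l i)) ->
  is_series (fun k => sum1 n (fun i => a i k)) (sum1 n l).
Proof.
  induction n as [|n IH]; intros Ha; simpl; [apply is_series_zero|].
  apply (is_series_plus (fun k => sum1 n (fun i => a i k)) (a (S n))).
  - apply IH; intros; apply Ha; lia.
  - apply Ha; lia.
Qed.

Lemma is_series_sum_f_R0 n (a : nat -> nat -> R) (l : nat -> R) :
  (forall i, (i <= n)%nat -> is_series (a i) (l i)) ->
  is_series (fun k => sum_f_R0 (fun i => a i k) n) (sum_f_R0 l n).
Proof.
  induction n as [|n IH]; intros Ha; simpl; [apply Ha; lia|].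
  apply (is_series_plus (fun k => sum_f_R0 (fun i => a i k) n) (a (S n))).
  - apply IH; intros; apply Ha; lia.
  - apply Ha; lia.
Qed.

Lemma is_series_shift (a : nat -> R) l :
  is_series a l -> is_series (fun k => a (S k)) (l - a 0%nat).
Proof.
  intros Ha. apply is_series_incr_1.
  assert (E : l - a 0%nat + a 0%nat = l) by ring.
  unfold plus; simpl. rewrite E. exact Ha.
Qed.

Lemma ex_series_alternating (a : nat -> R) :
  (forall n, a (S n) <= a n) -> is_lim_seq a 0 -> ex_series (fun k => (-1) ^ k * a k).
Proof.
  intros Hdecr Hlim.
  destruct (alternated_series a) as [l Hl]; [exact Hdecr | now apply is_lim_seq_Reals|].
  exists l.
  apply (is_lim_seq_ext (fun N => sum_f_R0 (tg_alt a) N) (sum_n (fun k => (-1) ^ k * a k)) l).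
  - intros N. rewrite <- sum_n_Reals. reflexivity.
  - now apply is_lim_seq_Reals.
Qed.

Lemma neg1_pow_sqr n : (-1) ^ n * (-1) ^ n = 1.
Proof. rewrite <- pow_add. replace (n + n)%nat with (2 * n)%nat by lia. apply pow_1_even. Qed.

Lemma INR_S_ge1 k : 1 <= INR (S k).
Proof. rewrite S_INR. pose proof (pos_INR k). lra. Qed.


Lemma is_lim_seq_inv_INR_S : is_lim_seq (fun k => / INR (S k)) 0.
Proof.
  apply (is_lim_seq_incr_1 (fun k => / INR k)).
  replace (Finite 0) with (Rbar_inv p_infty) by reflexivity.
  apply is_lim_seq_inv; [apply is_lim_seq_INR | discriminate].
Qed.

(** * Alternating zeta values and partial fractions *)

Lemma is_series_zetabar s : (1 <= s)%nat ->
  is_series (fun k => (-1) ^ k / INR (S k) ^ s) (zetabar s).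
Proof.
  intros Hs. apply Series_correct, (ex_series_alternating (fun k => / INR (S k) ^ s)).
  - intros n. pose proof (INR_S_ge1 n).
    apply Rinv_le_contravar; [apply pow_lt; lra|].
    apply pow_incr. rewrite (S_INR (S n)). lra.
  - apply (is_lim_seq_le_le (fun _ => 0) _ (fun k => / INR (S k)));
      [|apply is_lim_seq_const | apply is_lim_seq_inv_INR_S].
    intros n. pose proof (INR_S_ge1 n). split.
    + apply Rlt_le, Rinv_0_lt_compat, pow_lt; lra.
    + apply Rinv_le_contravar; [lra|].
      rewrite <- (pow_1 (INR (S n))) at 1. now apply Rle_pow.
Qed.

Lemma Hbar_S s r : Hbar s (S r) = Hbar s r + (-1) ^ r / INR (S r) ^ s.
Proof.
  unfold Hbar. cbn [sum1]. rewrite Nat.add_1_r. cbn [pow]. field.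
  apply pow_nonzero, not_0_INR. lia.
Qed.

Lemma is_series_zetabar_tail s r : (1 <= s)%nat ->
  is_series (fun k => (-1) ^ k / INR (S k + r) ^ s) ((-1) ^ r * (zetabar s - Hbar s r)).
Proof.
  intros Hs. induction r as [|r IH].
  - apply (is_series_ext_R (fun k => (-1) ^ k / INR (S k) ^ s)).
    + intros k. now rewrite Nat.add_0_r.
    + replace (_ * _) with (zetabar s) by (unfold Hbar; simpl; ring).
      now apply is_series_zetabar.
  - apply (is_series_ext_R (fun k => - ((-1) ^ S k / INR (S (S k) + r) ^ s))).
    + intros k. replace (S k + S r)%nat with (S (S k) + r)%nat by lia. cbn [pow]. field.
      apply pow_nonzero, not_0_INR. lia.
    + replace (_ * _) with (- ((-1) ^ r * (zetabar s - Hbar s r) - (-1) ^ 0 / INR (S 0 + r) ^ s)).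
      * apply (is_series_opp (fun k => (-1) ^ S k / INR (S (S k) + r) ^ s)).
        now apply (is_series_shift (fun k => (-1) ^ k / INR (S k + r) ^ s)).
      * rewrite Hbar_S. replace (S 0 + r)%nat with (S r) by lia.
        cbn [pow]. rewrite <- (neg1_pow_sqr r) at 1. field.
        apply pow_nonzero, not_0_INR. lia.
Qed.

Lemma partial_fraction M x s : 0 < x -> 0 < s ->
  / (x ^ M * (x + s)) =
  sum1 M (fun i => (-1) ^ (M - i) / s ^ (M - i + 1) * / x ^ i) + (-1) ^ M / s ^ M * / (x + s).
Proof.
  intros Hx Hs. induction M as [|M IH].
  - simpl. field. lra.
  - assert (Hx' : x ^ M <> 0) by (apply pow_nonzero; lra).
    replace (/ (x ^ S M * (x + s))) with (/ s * (/ x ^ S M - / (x ^ M * (x + s))))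
      by (cbn [pow]; field; repeat split; lra).
    cbn [sum1]. rewrite Nat.sub_diag.
    rewrite (sum1_ext M (fun i => (-1) ^ (S M - i) / s ^ (S M - i + 1) * / x ^ i)
                        (fun i => - / s * ((-1) ^ (M - i) / s ^ (M - i + 1) * / x ^ i))).
    + rewrite sum1_scal, IH, Nat.add_0_l, pow_1. cbn [pow]. field.
      repeat split; try apply pow_nonzero; lra.
    + intros i Hi. replace (S M - i)%nat with (S (M - i)) by lia.
      cbn [pow Nat.add]. field. repeat split; try apply pow_nonzero; lra.
Qed.

Lemma is_series_partial_fraction (c L : nat -> R) (T : R) M r : (1 <= r)%nat ->
  (forall i, (1 <= i <= M)%nat -> is_series (fun k => c k / INR (S k) ^ i) (L i)) ->
  is_series (fun k => c k / INR (S k + r)) T ->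
  is_series (fun k => c k / (INR (S k) ^ M * INR (S k + r)))
    (sum1 M (fun i => (-1) ^ (M - i) / INR r ^ (M - i + 1) * L i) + (-1) ^ M / INR r ^ M * T).
Proof.
  intros Hr HL HT.
  assert (Hr' : 0 < INR r) by (apply lt_0_INR; lia).
  apply (is_series_ext_R (fun k =>
      sum1 M (fun i => (-1) ^ (M - i) / INR r ^ (M - i + 1) * (c k / INR (S k) ^ i))
      + (-1) ^ M / INR r ^ M * (c k / INR (S k + r)))).
  - intros k.
    replace (c k / (INR (S k) ^ M * INR (S k + r)))
      with (c k * / (INR (S k) ^ M * (INR (S k) + INR r))) by (rewrite plus_INR; reflexivity).
    rewrite (partial_fraction M _ _ (lt_0_INR _ (Nat.lt_0_succ k)) Hr').
    rewrite Rmult_plus_distr_l, <- sum1_scal, plus_INR. f_equal.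
    + apply sum1_ext. intros. unfold Rdiv. ring.
    + unfold Rdiv. ring.
  - apply (is_series_plus _ (fun k => (-1) ^ M / INR r ^ M * (c k / INR (S k + r)))).
    + apply is_series_sum1. intros i Hi.
      apply (is_series_scal _ (fun k => c k / INR (S k) ^ i)). now apply HL.
    + now apply (is_series_scal _ (fun k => c k / INR (S k + r))).
Qed.

Definition alt_pow_shift M r :=
  sum1 M (fun i => (-1) ^ (M - i) / INR r ^ (M - i + 1) * zetabar i)
  + (-1) ^ (M + r) / INR r ^ M * (zetabar 1 - Hbar 1 r).

Lemma is_series_alt_pow_shift M r : (1 <= r)%nat ->
  is_series (fun k => (-1) ^ k / (INR (S k) ^ M * INR (S k + r))) (alt_pow_shift M r).
Proof.
  intros Hr. unfold alt_pow_shift.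
  replace ((-1) ^ (M + r) / INR r ^ M * (zetabar 1 - Hbar 1 r))
    with ((-1) ^ M / INR r ^ M * ((-1) ^ r * (zetabar 1 - Hbar 1 r)))
    by (rewrite pow_add; unfold Rdiv; ring).
  apply is_series_partial_fraction; [exact Hr | intros; apply is_series_zetabar; lia |].
  apply (is_series_ext_R (fun k => (-1) ^ k / INR (S k + r) ^ 1)).
  - intros k. now rewrite pow_1.
  - now apply is_series_zetabar_tail.
Qed.

(** * Harmonic numbers and the sums S^{+,-} *)

Lemma Hgen_of_nat p n : Hgen (Z.of_nat p) n = sum1 n (fun j => / INR j ^ p).
Proof.
  unfold Hgen. apply sum1_ext. intros j _.
  now rewrite powerRZ_neg', <- pow_powerRZ.
Qed.

Lemma Hgen_S p n : Hgen (Z.of_nat p) (S n) = Hgen (Z.of_nat p) n + / INR (S n) ^ p.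
Proof. now rewrite !Hgen_of_nat. Qed.

Lemma Hgen_nonneg p n : 0 <= Hgen (Z.of_nat p) n.
Proof.
  induction n as [|n IH]; [unfold Hgen; simpl; lra|].
  rewrite Hgen_S. pose proof (pow_lt _ p (lt_0_INR _ (Nat.lt_0_succ n))).
  pose proof (Rinv_0_lt_compat _ H). lra.
Qed.

Lemma Hgen_S_ge1 p n : 1 <= Hgen (Z.of_nat p) (S n).
Proof.
  induction n as [|n IH].
  - rewrite Hgen_S, pow1. unfold Hgen. simpl. lra.
  - rewrite Hgen_S. pose proof (pow_lt _ p (lt_0_INR _ (Nat.lt_0_succ (S n)))).
    pose proof (Rinv_0_lt_compat _ H). lra.
Qed.

Lemma Hgen_le_harmonic p k : (1 <= p)%nat ->
  Hgen (Z.of_nat p) (S k) <= sum_f_R0 (fun j => / INR (S j)) k.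
Proof.
  intros Hp. induction k as [|k IH].
  - rewrite Hgen_S, pow1. unfold Hgen. simpl. lra.
  - rewrite Hgen_S, tech5. apply Rplus_le_compat; [exact IH|].
    pose proof (INR_S_ge1 (S k)).
    apply Rinv_le_contravar; [lra|].
    rewrite <- (pow_1 (INR (S (S k)))) at 1. now apply Rle_pow.
Qed.

Lemma is_lim_Hgen_div p : (1 <= p)%nat ->
  is_lim_seq (fun k => Hgen (Z.of_nat p) (S k) / INR (S k)) 0.
Proof.
  intros Hp.
  assert (Hharm : is_lim_seq (fun k => sum_f_R0 (fun j => / INR (S j)) k / INR (S k)) 0).
  { apply (is_lim_seq_incr_1 (fun n => sum_f_R0 (fun j => / INR (S j)) (pred n) / INR n)).
    apply is_lim_seq_Reals, Cesaro_1, is_lim_seq_Reals, is_lim_seq_inv_INR_S. }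
  refine (is_lim_seq_le_le (fun _ => 0) _ _ _ _ (is_lim_seq_const 0) Hharm).
  intros n. pose proof (INR_S_ge1 n). split.
  - apply Rmult_le_pos; [apply Hgen_nonneg | apply Rlt_le, Rinv_0_lt_compat; lra].
  - apply Rmult_le_compat_r; [apply Rlt_le, Rinv_0_lt_compat; lra | now apply Hgen_le_harmonic].
Qed.

Lemma Hgen_div_decreasing p n : (1 <= p)%nat ->
  Hgen (Z.of_nat p) (S (S n)) / INR (S (S n)) <= Hgen (Z.of_nat p) (S n) / INR (S n).
Proof.
  intros Hp. set (h := Hgen (Z.of_nat p) (S n)). set (x := INR (S n)).
  assert (Hx : 1 <= x) by apply INR_S_ge1.
  assert (Hh : 1 <= h) by apply Hgen_S_ge1.
  rewrite Hgen_S. fold h.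
  replace (INR (S (S n))) with (x + 1) by (rewrite (S_INR (S n)); reflexivity).
  set (t := / (x + 1) ^ p).
  assert (Ht : t * (x + 1) <= 1).
  { unfold t. apply (Rmult_le_reg_l ((x + 1) ^ p)); [apply pow_lt; lra|].
    replace ((x + 1) ^ p * (/ (x + 1) ^ p * (x + 1))) with (x + 1)
      by (field; apply pow_nonzero; lra).
    rewrite Rmult_1_r, <- (pow_1 (x + 1)) at 1. apply Rle_pow; [lra | exact Hp]. }
  apply (Rmult_le_reg_r (x * (x + 1))); [nra|].
  replace ((h + t) / (x + 1) * (x * (x + 1))) with ((h + t) * x) by (field; lra).
  replace (h / x * (x * (x + 1))) with (h * (x + 1)) by (field; lra).
  nra.
Qed.

Lemma is_series_Spm p q : (1 <= p)%nat -> (1 <= q)%nat ->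
  is_series (fun k => (-1) ^ k * Hgen (Z.of_nat p) (S k) / INR (S k) ^ q) (Spm p q).
Proof.
  intros Hp Hq. apply Series_correct. destruct q as [|q]; [lia|].
  set (a k := Hgen (Z.of_nat p) (S k) / INR (S k) * / INR (S k) ^ q).
  assert (Ha : forall k, (-1) ^ k * a k = (-1) ^ k * Hgen (Z.of_nat p) (S k) / INR (S k) ^ S q).
  { intros k. unfold a. pose proof (INR_S_ge1 k). cbn [pow]. field.
    split; [apply pow_nonzero|]; lra. }
  apply (ex_series_ext _ _ Ha), ex_series_alternating.
  - intros n. pose proof (INR_S_ge1 n). pose proof (INR_S_ge1 (S n)).
    apply Rmult_le_compat.
    + apply Rmult_le_pos; [apply Hgen_nonneg | apply Rlt_le, Rinv_0_lt_compat; lra].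
    + apply Rlt_le, Rinv_0_lt_compat, pow_lt; lra.
    + now apply Hgen_div_decreasing.
    + apply Rinv_le_contravar; [apply pow_lt; lra|]. apply pow_incr.
      rewrite (S_INR (S n)). lra.
  - refine (is_lim_seq_le_le (fun _ => 0) _ _ _ _ (is_lim_seq_const 0) (is_lim_Hgen_div p Hp)).
    intros n. pose proof (INR_S_ge1 n). pose proof (Hgen_nonneg p (S n)).
    assert (Hinv : 0 < / INR (S n) ^ q <= 1).
    { split; [apply Rinv_0_lt_compat, pow_lt; lra|].
      rewrite <- Rinv_1. apply Rinv_le_contravar; [lra | now apply pow_R1_Rle]. }
    assert (0 <= Hgen (Z.of_nat p) (S n) / INR (S n))
      by (apply Rmult_le_pos; [lra | apply Rlt_le, Rinv_0_lt_compat; lra]).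
    unfold a. split; nra.
Qed.

(** * The shifted harmonic series U_r *)

Definition harm_shift_term p r k := (-1) ^ k * Hgen (Z.of_nat p) (S k) / INR (S k + r).

(* Index shift n -> n + 1 combined with H_{n+1} = H_n + (n+1)^(-p). *)
Lemma is_series_harm_shift_succ p r (A B : R) :
  is_series (harm_shift_term p r) A ->
  is_series (fun k => (-1) ^ k / (INR (S k) ^ p * INR (S k + r))) B ->
  is_series (harm_shift_term p (S r)) (B - A).
Proof.
  intros HA HB.
  apply (is_series_ext_R (fun k =>
           (-1) ^ S k / (INR (S (S k)) ^ p * INR (S (S k) + r)) - harm_shift_term p r (S k))).
  - intros k. unfold harm_shift_term. rewrite (Hgen_S p (S k)).
    replace (S k + S r)%nat with (S (S k) + r)%nat by lia.
    cbn [pow]. field. split; [|apply pow_nonzero]; apply not_0_INR; lia.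
  - replace (B - A) with ((B - (-1) ^ 0 / (INR 1 ^ p * INR (S r))) - (A - harm_shift_term p r 0)).
    + apply (is_series_minus (fun k => (-1) ^ S k / (INR (S (S k)) ^ p * INR (S (S k) + r)))
               (fun k => harm_shift_term p r (S k)));
        now apply (is_series_shift (fun k => _)).
    + unfold harm_shift_term. rewrite Hgen_S. change (INR 1) with 1. rewrite pow1.
      replace (S 0 + r)%nat with (S r) by lia. cbn [Hgen sum1 pow]. field.
      apply not_0_INR. lia.
Qed.

Lemma is_series_harm_shift p r : (1 <= p)%nat ->
  is_series (harm_shift_term p (S r))
    ((-1) ^ S r * (Spm p 1 - zetabar (p + 1) - sum1 r (fun s => (-1) ^ s * alt_pow_shift p s))).
Proof.
  intros Hp. induction r as [|r IH].
  - replace (_ * _) with (zetabar (p + 1) - Spm p 1) by (simpl; ring).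
    apply is_series_harm_shift_succ.
    + apply (is_series_ext_R (fun k => (-1) ^ k * Hgen (Z.of_nat p) (S k) / INR (S k) ^ 1)).
      * intros k. unfold harm_shift_term. now rewrite pow_1, Nat.add_0_r.
      * apply is_series_Spm; lia.
    + apply (is_series_ext_R (fun k => (-1) ^ k / INR (S k) ^ (p + 1))).
      * intros k. now rewrite pow_add, pow_1, Nat.add_0_r.
      * apply is_series_zetabar. lia.
  - set (X := Spm p 1 - zetabar (p + 1) - sum1 r (fun s => (-1) ^ s * alt_pow_shift p s)) in IH.
    replace (_ * _) with (alt_pow_shift p (S r) - (-1) ^ S r * X).
    + apply is_series_harm_shift_succ; [exact IH|]. apply is_series_alt_pow_shift. lia.
    + transitivity ((-1) ^ S r * (-1) ^ S r * alt_pow_shift p (S r) - (-1) ^ S r * X).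
      * now rewrite neg1_pow_sqr, Rmult_1_l.
      * unfold X. cbn [sum1 pow]. ring.
Qed.

Lemma sum1_neg1_pow_div q n : sum1 n (fun j => (-1) ^ j / INR j ^ q) = - Hbar q n.
Proof.
  unfold Hbar. rewrite <- sum1_opp. apply sum1_ext. intros j _.
  rewrite pow_add. unfold Rdiv. ring.
Qed.

Lemma sum1_signed_alt_pow_shift p r :
  sum1 r (fun s => (-1) ^ s * alt_pow_shift p s) =
  - sum1 p (fun j => (-1) ^ (p - j) * zetabar j * Hbar (p - j + 1) r)
  + (-1) ^ p * (zetabar 1 * Hgen (Z.of_nat p) r - sum1 r (fun n => Hbar 1 n / INR n ^ p)).
Proof.
  unfold alt_pow_shift.
  rewrite (sum1_ext r _ (fun s =>
     sum1 p (fun j => (-1) ^ (p - j) * zetabar j * ((-1) ^ s / INR s ^ (p - j + 1)))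
     + (-1) ^ p * (zetabar 1 * / INR s ^ p - Hbar 1 s / INR s ^ p))).
  - rewrite sum1_plus, sum1_comm, sum1_scal, sum1_minus, sum1_scal, <- Hgen_of_nat.
    f_equal. rewrite <- sum1_opp. apply sum1_ext. intros j _.
    rewrite sum1_scal, sum1_neg1_pow_div. ring.
  - intros s _. rewrite Rmult_plus_distr_l, <- sum1_scal. f_equal.
    + apply sum1_ext. intros. unfold Rdiv. ring.
    + rewrite pow_add.
      transitivity ((-1) ^ s * (-1) ^ s * ((-1) ^ p / INR s ^ p * (zetabar 1 - Hbar 1 s)));
        [unfold Rdiv; ring | rewrite neg1_pow_sqr; unfold Rdiv; ring].
Qed.

Lemma is_series_S_term_pos p m r : (1 <= p)%nat -> (1 <= m)%nat -> (1 <= r)%nat ->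
  is_series (S_term (Z.of_nat p) m 1 r)
    (sum1 m (fun i => (-1) ^ (m - i) / (INR r) ^ (m - i + 1) * Spm p i)
     + (-1) ^ (m + r) / (INR r) ^ m * Spm p 1
     + (-1) ^ (m + r - 1) / (INR r) ^ m * zetabar (p + 1)
     + (-1) ^ m / (INR r) ^ m *
         (sum1 p (fun j => (-1) ^ (p - j + r) * zetabar j * Hbar (p - j + 1) (r - 1))
          + (-1) ^ (p + r - 1) * zetabar 1 * Hgen (Z.of_nat p) (r - 1))
     + (-1) ^ (m + p + r) / (INR r) ^ m *
         sum1 (r - 1) (fun n => Hbar 1 n / (INR n) ^ p)).
Proof.
  intros Hp Hm Hr. destruct r as [|r]; [lia|].
  replace (S r - 1)%nat with r by lia.
  replace (m + S r - 1)%nat with (m + r)%nat by lia.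
  replace (p + S r - 1)%nat with (p + r)%nat by lia.
  rewrite (sum1_ext p _ (fun j => (-1) ^ S r * ((-1) ^ (p - j) * zetabar j * Hbar (p - j + 1) r)))
    by (intros; rewrite pow_add; ring).
  rewrite sum1_scal.
  replace (_ + _ + _ + _ + _) with
    (sum1 m (fun i => (-1) ^ (m - i) / INR (S r) ^ (m - i + 1) * Spm p i)
     + (-1) ^ m / INR (S r) ^ m * ((-1) ^ S r * (Spm p 1 - zetabar (p + 1)
          - sum1 r (fun s => (-1) ^ s * alt_pow_shift p s))))
    by (rewrite sum1_signed_alt_pow_shift, !pow_add; cbn [pow]; unfold Rdiv; ring).
  apply (is_series_ext_R (fun k =>
           (-1) ^ k * Hgen (Z.of_nat p) (S k) / (INR (S k) ^ m * INR (S k + S r)))).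
  - intros k. unfold S_term. now rewrite pow_1.
  - apply is_series_partial_fraction; [lia | intros; apply is_series_Spm; lia |].
    now apply is_series_harm_shift.
Qed.

(** * Bernoulli numbers and Faulhaber's formula *)

Lemma length_bernp_list n : length (bernp_list n) = S n.
Proof. induction n as [|n IH]; simpl; [reflexivity|]. rewrite length_app, IH. simpl. lia. Qed.

Lemma nth_bernp_list n i : (i <= n)%nat -> nth i (bernp_list n) 0 = bernp i.
Proof.
  induction n as [|n IH]; intros Hi.
  - now replace i with 0%nat by lia.
  - destruct (Nat.eq_dec i (S n)) as [->|Hne]; [reflexivity|].
    simpl. rewrite app_nth1 by (rewrite length_bernp_list; lia). apply IH. lia.
Qed.

Lemma bernp_S k :
  bernp (S k) = 1 - / INR (k + 2) * sum_f_R0 (fun i => Binomial.C (k + 2) i * bernp i) k.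
Proof.
  unfold bernp at 1. simpl bernp_list.
  rewrite app_nth2; rewrite length_bernp_list; [|lia].
  rewrite Nat.sub_diag. simpl nth. do 2 f_equal.
  apply sum_eq. intros i Hi. now rewrite nth_bernp_list by lia.
Qed.

Lemma binom_succ_pred n : Binomial.C (S n) n = INR (S n).
Proof.
  rewrite pascal_step1 by lia. replace (S n - n)%nat with 1%nat by lia.
  rewrite pascal_step3, C_n_0 by lia. rewrite Nat.sub_0_r. simpl (INR 1). field.
Qed.

Lemma sum_binom_bernp q : sum_f_R0 (fun l => Binomial.C (S q) l * bernp l) q = INR (S q).
Proof.
  destruct q as [|q].
  - simpl. rewrite C_n_0. unfold bernp. simpl. ring.
  - rewrite tech5, bernp_S, binom_succ_pred.
    replace (S (S q)) with (q + 2)%nat by lia. field.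
    rewrite plus_INR. simpl. pose proof (pos_INR q). lra.
Qed.

Lemma sum_f_R0_trunc (g : nat -> R) j n : (j <= n)%nat ->
  sum_f_R0 (fun k => if Nat.leb k j then g k else 0) n = sum_f_R0 g j.
Proof.
  induction n as [|n IH]; intros Hj.
  - now replace j with 0%nat by lia.
  - destruct (Nat.eq_dec j (S n)) as [->|Hne].
    + apply sum_eq. intros i Hi. now rewrite (proj2 (Nat.leb_le i (S n))) by lia.
    + rewrite tech5, IH by lia. rewrite (proj2 (Nat.leb_gt (S n) j)) by lia. ring.
Qed.

Lemma sum_f_R0_comm (u : nat -> nat -> R) n :
  sum_f_R0 (fun i => sum_f_R0 (u i) n) n = sum_f_R0 (fun j => sum_f_R0 (fun i => u i j) n) n.
Proof.
  pose proof (sum_n_switch u n n) as Hswitch.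
  rewrite !sum_n_Reals in Hswitch.
  rewrite (sum_eq _ (fun i => sum_n (u i) n)),
          (sum_eq (fun j => sum_f_R0 _ n) (fun j => sum_n (fun i => u i j) n));
    [exact Hswitch | intros; now rewrite sum_n_Reals ..].
Qed.

Lemma sum_f_R0_triangle_comm (u : nat -> nat -> R) n :
  sum_f_R0 (fun l => sum_f_R0 (u l) (n - l)) n =
  sum_f_R0 (fun k => sum_f_R0 (fun l => u l k) (n - k)) n.
Proof.
  transitivity (sum_f_R0 (fun l => sum_f_R0 (fun k =>
                  if Nat.leb k (n - l) then u l k else 0) n) n).
  { apply sum_eq. intros l Hl. now rewrite sum_f_R0_trunc by lia. }
  rewrite sum_f_R0_comm. apply sum_eq. intros k Hk.
  rewrite <- (sum_f_R0_trunc (fun l => u l k) (n - k) n) by lia.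
  apply sum_eq. intros l Hl.
  destruct (Nat.leb_spec k (n - l)), (Nat.leb_spec l (n - k)); reflexivity || lia.
Qed.

Lemma pow_succ_diff_binom x q :
  (x + 1) ^ S q - x ^ S q = sum_f_R0 (fun k => Binomial.C (S q) k * x ^ k) q.
Proof.
  rewrite binomial, tech5, Nat.sub_diag, C_n_n.
  rewrite (sum_eq _ (fun k => Binomial.C (S q) k * x ^ k)) by (intros; rewrite pow1; ring).
  simpl. ring.
Qed.

Lemma binom_mul_binom_comm N l k : (l + k <= N)%nat ->
  Binomial.C N l * Binomial.C (N - l) k = Binomial.C N k * Binomial.C (N - k) l.
Proof.
  intros H. unfold Binomial.C.
  replace (N - l - k)%nat with (N - k - l)%nat by lia.
  field. repeat split; apply INR_fact_neq_0.
Qed.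

Definition faulhaber_poly p x :=
  sum_f_R0 (fun l => Binomial.C (S p) l * bernp l * x ^ (S p - l)) p.

Lemma faulhaber_poly_0 p : faulhaber_poly p 0 = 0.
Proof.
  unfold faulhaber_poly. rewrite (sum_eq _ (fun _ => 0)), sum_cte; [ring|].
  intros l Hl. replace (S p - l)%nat with (S (p - l)) by lia. simpl. ring.
Qed.

Lemma faulhaber_poly_diff p x :
  faulhaber_poly p (x + 1) - faulhaber_poly p x = INR (S p) * (x + 1) ^ p.
Proof.
  unfold faulhaber_poly. rewrite <- minus_sum.
  rewrite (sum_eq _ (fun l => sum_f_R0 (fun k =>
             Binomial.C (S p) l * bernp l * (Binomial.C (S p - l) k * x ^ k)) (p - l))).
  2:{ intros l Hl. replace (S p - l)%nat with (S (p - l)) by lia.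
      rewrite <- Rmult_minus_distr_l, pow_succ_diff_binom, scal_sum.
      apply sum_eq. intros. ring. }
  rewrite sum_f_R0_triangle_comm, binomial, scal_sum. apply sum_eq. intros k Hk.
  rewrite (sum_eq _ (fun l => Binomial.C (S (p - k)) l * bernp l * (Binomial.C (S p) k * x ^ k))).
  2:{ intros l Hl. replace (S (p - k)) with (S p - k)%nat by lia.
      transitivity (Binomial.C (S p) l * Binomial.C (S p - l) k * bernp l * x ^ k); [ring|].
      rewrite binom_mul_binom_comm by lia. ring. }
  rewrite <- scal_sum, sum_binom_bernp, pow1.
  replace (S (p - k)) with (S p - k)%nat by lia.
  rewrite pascal_step2 by lia. field. apply not_0_INR. lia.
Qed.

Lemma Hgen_neg_faulhaber p n : Hgen (- Z.of_nat p) n = / INR (S p) * faulhaber_poly p (INR n).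
Proof.
  induction n as [|n IH].
  - rewrite faulhaber_poly_0. unfold Hgen. simpl. ring.
  - unfold Hgen in *. cbn [sum1]. rewrite IH, Z.opp_involutive, <- pow_powerRZ.
    rewrite (S_INR n).
    replace (faulhaber_poly p (INR n + 1))
      with (faulhaber_poly p (INR n) + INR (S p) * (INR n + 1) ^ p)
      by (rewrite <- faulhaber_poly_diff; ring).
    field. apply not_0_INR. lia.
Qed.

Lemma is_series_S_term_neg p m r : (1 <= m)%nat -> (1 <= r)%nat -> (p + 1 <= m)%nat ->
  is_series (S_term (- Z.of_nat p) m 1 r)
    (/ INR (p + 1) *
     sum_f_R0 (fun l =>
       Binomial.C (p + 1) l * bernp l *
       (sum1 (m - p - 1 + l)
          (fun i => (-1) ^ (m - p - 1 + l - i) / (INR r) ^ (m - p + l - i) * zetabar i)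
        + (-1) ^ (m - p - 1 + l + r) / (INR r) ^ (m - p - 1 + l)
            * (zetabar 1 - Hbar 1 r))) p).
Proof.
  intros Hm Hr Hpm. rewrite Nat.add_1_r.
  apply (is_series_ext_R (fun k => / INR (S p) *
     sum_f_R0 (fun l => Binomial.C (S p) l * bernp l *
        ((-1) ^ k / (INR (S k) ^ (m - p - 1 + l) * INR (S k + r)))) p)).
  - intros k. symmetry. unfold S_term. rewrite Hgen_neg_faulhaber, pow_1. unfold faulhaber_poly.
    transitivity (/ INR (S p) * sum_f_R0 (fun l => Binomial.C (S p) l * bernp l
                    * INR (S k) ^ (S p - l) * ((-1) ^ k / (INR (S k) ^ m * INR (S k + r)))) p).
    { rewrite <- scal_sum. unfold Rdiv. ring. }
    f_equal. apply sum_eq. intros l Hl.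
    replace (INR (S k) ^ m) with (INR (S k) ^ (S p - l) * INR (S k) ^ (m - p - 1 + l))
      by (rewrite <- pow_add; f_equal; lia).
    pose proof (lt_0_INR _ (Nat.lt_0_succ k)). pose proof (lt_0_INR (S k + r) ltac:(lia)).
    field. repeat split; try apply pow_nonzero; lra.
  - apply (is_series_scal _ (fun k => sum_f_R0 _ p)), is_series_sum_f_R0. intros l Hl.
    replace (sum1 _ _ + _) with (alt_pow_shift (m - p - 1 + l) r).
    + apply (is_series_scal _ (fun k => _ / (_ * _))). now apply is_series_alt_pow_shift.
    + unfold alt_pow_shift. f_equal. apply sum1_ext. intros i Hi. do 3 f_equal. lia.
Qed.

Theorem lemma4 :
  (forall p m r : nat, (1 <= p)%nat -> (1 <= m)%nat -> (1 <= r)%nat ->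
    is_series (S_term (Z.of_nat p) m 1 r)
      (sum1 m (fun i => (-1) ^ (m - i) / (INR r) ^ (m - i + 1) * Spm p i)
       + (-1) ^ (m + r) / (INR r) ^ m * Spm p 1
       + (-1) ^ (m + r - 1) / (INR r) ^ m * zetabar (p + 1)
       + (-1) ^ m / (INR r) ^ m *
           (sum1 p (fun j => (-1) ^ (p - j + r) * zetabar j * Hbar (p - j + 1) (r - 1))
            + (-1) ^ (p + r - 1) * zetabar 1 * Hgen (Z.of_nat p) (r - 1))
       + (-1) ^ (m + p + r) / (INR r) ^ m *
           sum1 (r - 1) (fun n => Hbar 1 n / (INR n) ^ p)))
  /\
  (forall p m r : nat, (1 <= m)%nat -> (1 <= r)%nat -> (p + 1 <= m)%nat ->
    is_series (S_term (- Z.of_nat p) m 1 r)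
      (/ INR (p + 1) *
       sum_f_R0 (fun l =>
         Binomial.C (p + 1) l * bernp l *
         (sum1 (m - p - 1 + l)
            (fun i => (-1) ^ (m - p - 1 + l - i) / (INR r) ^ (m - p + l - i) * zetabar i)
          + (-1) ^ (m - p - 1 + l + r) / (INR r) ^ (m - p - 1 + l)
              * (zetabar 1 - Hbar 1 r))) p)).
Proof.
  split.
  - intros p m r Hp Hm Hr. now apply is_series_S_term_pos.
  - intros p m r Hm Hr Hpm. now apply is_series_S_term_neg.
Qed.
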